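(* Let $L$ be a finite-dimensional pure, nonnilpotent, solvable Lie algebra over $\mathbb{C}$ of breadth $2$ such that $\dim[L,L]=2$ and $\dim L^k=2$ for all integers $k\geq 2$. Then $Z(L)=\{0\}$ and $C_L([L,L])$ is an abelian ideal of $L$.
   Context: For $x\in L$, $b(x)=\mathrm{rank}(\mathrm{ad}_x)$ and the breadth of $L$ is $b(L)=\max\{b(x)\mid x\in L\}$. $L$ is pure if it has no abelian ideal as a direct summand; equivalently $Z(L)\subseteq[L,L]$, where $Z(L)$ is the center. The lower central series is indexed by $L^0=L$, $L^1=[L,L]$, $L^k=[L,L^{k-1}]$ for $k\geq 2$. $C_L(S)$ denotes the centralizer of a subset $S$ in $L$. *)

From mathcomp Require Import all_boot all_algebra.
From mathcomp Require Import complex.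
From mathcomp Require Import Rstruct.
Set Implicit Arguments. Unset Strict Implicit. Unset Printing Implicit Defensive.
Import GRing.Theory.
Local Open Scope ring_scope.

Notation Cplx := (Rdefinitions.R[i]).

Section Lie.
Variable (F : fieldType) (L : vectType F) (br : L -> L -> L).

Definition is_lie_bracket : Prop :=
  [/\ (forall (a : F) x y z, br (a *: x + y) z = a *: br x z + br y z),
      (forall (a : F) x y z, br x (a *: y + z) = a *: br x y + br x z),
      (forall x, br x x = 0) &
      (forall x y z, br x (br y z) + br y (br z x) + br z (br x y) = 0)].

(* [U, V] : the subspace spanned by all brackets [u, v], u in U, v in V
   (spanned by the brackets of basis vectors, by bilinearity). *)
Definition lie_comm (U V : {vspace L}) : {vspace L} :=
  <<[seq br u v | u <- vbasis U, v <- vbasis V]>>%VS.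

Fixpoint lcs (k : nat) : {vspace L} :=
  if k is k'.+1 then lie_comm fullv (lcs k') else fullv.

Fixpoint dser (k : nat) : {vspace L} :=
  if k is k'.+1 then lie_comm (dser k') (dser k') else fullv.

Definition lie_nilpotent : Prop := exists k, lcs k = 0%VS.
Definition lie_solvable : Prop := exists k, dser k = 0%VS.

Definition ad (x : L) : 'End(L) := linfun (br x).
Definition lie_b (x : L) : nat := \dim (limg (ad x)).
Definition has_breadth (n : nat) : Prop :=
  (forall x, (lie_b x <= n)%N) /\ exists x, lie_b x = n.

Definition lie_ideal (I : {vspace L}) : Prop :=
  forall x y, y \in I -> br x y \in I.
Definition lie_abelian (I : {vspace L}) : Prop :=
  forall x y, x \in I -> y \in I -> br x y = 0.

Definition lie_pure : Prop :=
  ~ exists I J : {vspace L},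
      [/\ I != 0%VS, lie_ideal I, lie_abelian I, lie_ideal J &
          ((I + J)%VS = fullv /\ (I :&: J)%VS = 0%VS)].

Definition in_center (z : L) : Prop := forall y, br z y = 0.

Definition in_centralizer (S : {vspace L}) (x : L) : Prop :=
  forall y, y \in S -> br x y = 0.
End Lie.

From HB Require Import structures.
From mathcomp Require Import all_boot all_algebra.
From mathcomp Require Import complex.
From mathcomp Require Import Rstruct.
Import GRing.Theory.
Set Implicit Arguments. Unset Strict Implicit. Unset Printing Implicit Defensive.
Local Open Scope ring_scope.

(* Write N = [L,L].  A nonzero central z must lie in N, for otherwise the
   line <z> would split off as an abelian direct summand, against purity; so
   N = <z, w> for some w.  As z is central, [u, N] = [u, w] for all u, hence
   L^2 = [L, N] lies in the image of ad_w, and dim L^2 = dim N forces L^2 = N: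
   z = [w, u1] and w = [w, u2].  Since [w, N] = 0, the Jacobi identity gives
   [u1, [u2, w]] = [u2, [u1, w]], i.e. [u1, w] = [u2, z] = 0, so z = 0.
   The claims on C_L(N) are then Jacobi again: the bracket of two elements of
   C_L(N) is central, and the centralizer of an ideal is an ideal. *)

Section LineComplement.
Variables (F : fieldType) (L : vectType F).

Lemma vline_cap_eq0 (z : L) (U : {vspace L}) : z \notin U -> (<[z]> :&: U = 0)%VS.
Proof.
move=> zU; apply/eqP; rewrite -subv0; apply/subvP => _ /memv_capP [/vlineP [a ->]].
by rewrite rpredZeq (negPf zU) orbF memv0 => /eqP ->; rewrite scale0r.
Qed.

Lemma line_complement (z : L) (U : {vspace L}) : z \notin U ->
  exists J : {vspace L}, [/\ (U <= J)%VS, (<[z]> + J)%VS = fullv & (<[z]> :&: J = 0)%VS].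
Proof.
move=> zU; set C := ((<[z]> + U)^C)%VS; exists (U + C)%VS; split.
- exact: addvSl.
- by rewrite addvA addv_complf.
have JzU : ((U + C) :&: (<[z]> + U) = U)%VS.
  by rewrite -vspace_modl ?addvSr // capvC capv_compl addv0.
apply/eqP; rewrite -subv0 -(vline_cap_eq0 zU); apply/subvP => v /memv_capP [vz vJ].
rewrite memv_cap vz -JzU memv_cap vJ.
exact: subvP (addvSl _ _) _ vz.
Qed.

End LineComplement.

Section LieBracket.
Variables (F : fieldType) (L : vectType F) (br : L -> L -> L).
Hypothesis brL : is_lie_bracket br.

Lemma brDl x y z : br (x + y) z = br x z + br y z.
Proof. by case: brL => brlin _ _ _; have := brlin 1 x y z; rewrite !scale1r. Qed.

Lemma brDr x y z : br z (x + y) = br z x + br z y.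
Proof. by case: brL => _ brlin _ _; have := brlin 1 z x y; rewrite !scale1r. Qed.

Lemma br0l z : br 0 z = 0.
Proof. by apply: (addrI (br 0 z)); rewrite -brDl !addr0. Qed.

Lemma br0r z : br z 0 = 0.
Proof. by apply: (addrI (br z 0)); rewrite -brDr !addr0. Qed.

Lemma brZl a x z : br (a *: x) z = a *: br x z.
Proof. by case: brL => brlin _ _ _; have := brlin a x 0 z; rewrite !addr0 br0l addr0. Qed.

Lemma brZr a x z : br z (a *: x) = a *: br z x.
Proof. by case: brL => _ brlin _ _; have := brlin a z x 0; rewrite !addr0 br0r addr0. Qed.

Lemma brxx x : br x x = 0.
Proof. by case: brL. Qed.

Lemma br_anticomm x y : br x y = - br y x.
Proof.
apply/eqP; rewrite -addr_eq0.
by have := brxx (x + y); rewrite brDl !brDr !brxx add0r addr0 => ->.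
Qed.

Lemma brNr x y : br x (- y) = - br x y.
Proof. by rewrite -scaleN1r brZr scaleN1r. Qed.

Lemma jacobi x y z : br x (br y z) + br y (br z x) + br z (br x y) = 0.
Proof. by case: brL. Qed.

Lemma adE x y : ad br x y = br x y.
Proof.
have br_linear : linear (br x).
  by case: brL => _ brlin _ _ a u v; apply: brlin.
pose adx : {linear L -> L} := HB.pack (br x) (GRing.isLinear.Build _ _ _ _ _ br_linear).
exact: (lfunE adx).
Qed.

Lemma br_suml I r P (G : I -> L) z :
  br (\sum_(i <- r | P i) G i) z = \sum_(i <- r | P i) br (G i) z.
Proof. exact: (big_morph (br^~ z) (fun x y => brDl x y z) (br0l z)). Qed.

Lemma br_sumr I r P (G : I -> L) z :
  br z (\sum_(i <- r | P i) G i) = \sum_(i <- r | P i) br z (G i).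
Proof. exact: (big_morph (br z) (fun x y => brDr x y z) (br0r z)). Qed.

Lemma mem_lie_comm (U V : {vspace L}) u v :
  u \in U -> v \in V -> br u v \in lie_comm br U V.
Proof.
move=> uU vV; rewrite (coord_vbasis uU) (coord_vbasis vV) br_suml.
apply: memv_suml => i _; rewrite brZl br_sumr; apply: memvZ.
apply: memv_suml => j _; rewrite brZr; apply/memvZ/memv_span.
by apply: allpairs_f; apply: mem_nth; rewrite size_tuple.
Qed.

Lemma lie_comm_sub (U V W : {vspace L}) :
  (forall u v, u \in U -> v \in V -> br u v \in W) -> (lie_comm br U V <= W)%VS.
Proof.
move=> brUV; apply/span_subvP => _ /allpairsP [[u v] [/= uU vV ->]].
by apply: brUV; apply: vbasis_mem.
Qed.

Local Notation derived := (lie_comm br fullv fullv).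

Lemma derived_br x y : br x y \in derived.
Proof. exact: mem_lie_comm (memvf x) (memvf y). Qed.

Lemma lie_ideal_derived : lie_ideal br derived.
Proof. by move=> x y _; apply: derived_br. Qed.

Lemma lcs_sub_derived k : (lcs br k.+1 <= derived)%VS.
Proof. by apply: lie_comm_sub => u v _ _; apply: derived_br. Qed.

Lemma centralizer_ideal_br (I : {vspace L}) x y :
  lie_ideal br I -> in_centralizer br I y -> in_centralizer br I (br x y).
Proof.
move=> idI Cy u uI; have := jacobi u x y.
have uxI : br u x \in I by rewrite br_anticomm memvN idI.
rewrite (Cy u uI) br0r (Cy _ uxI) !addr0 => brux.
by rewrite br_anticomm brux oppr0.
Qed.

Lemma centralizer_derived_br_center x y :
  in_centralizer br derived x -> in_centralizer br derived y -> in_center br (br x y).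
Proof.
move=> Cx Cy w; have := jacobi w x y.
rewrite (Cx (br y w)) ?(Cy (br w x)) ?derived_br // !addr0 => brw.
by rewrite br_anticomm brw oppr0.
Qed.

Lemma pure_center_sub_derived z : lie_pure br -> in_center br z -> z \in derived.
Proof.
move=> pure zC; apply/negPn/negP => zN; apply: pure.
have [J [derJ zJ zJ0]] := line_complement zN.
exists <[z]>%VS, J; split=> //.
- rewrite -dimv_eq0 dim_vline; suff -> : z != 0 by [].
  by apply: contraNneq zN => ->; rewrite mem0v.
- by move=> x _ /vlineP [a ->]; rewrite brZr br_anticomm zC oppr0 scaler0 mem0v.
- by move=> _ _ /vlineP [a ->] /vlineP [b ->]; rewrite brZl brZr zC !scaler0.
- by move=> x y _; apply: (subvP derJ); apply: derived_br.
Qed.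

Section CentralPlane.
Variables z w : L.
Hypotheses (zC : in_center br z) (derE : derived = (<[z]> + <[w]>)%VS).

Lemma br_derived_plane u n : n \in derived -> exists b, br u n = b *: br u w.
Proof.
rewrite derE => /memv_addP [_ /vlineP [a ->] [_ /vlineP [b ->] ->]].
by exists b; rewrite brDr !brZr br_anticomm zC oppr0 scaler0 add0r.
Qed.

Lemma br_br_swap x y : br x (br y w) = br y (br x w).
Proof.
have [b brw] := br_derived_plane w (derived_br x y).
have := jacobi x y w; rewrite brw brxx scaler0 addr0.
by rewrite [br w x]br_anticomm brNr => /eqP; rewrite subr_eq0 => /eqP.
Qed.

Lemma lcs2_sub_limg_ad : (lcs br 2 <= limg (ad br w))%VS.
Proof.
apply: lie_comm_sub => u n _ nN; have [b ->] := br_derived_plane u nN.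
by rewrite br_anticomm -brNr -brZr -adE memv_img ?memvf.
Qed.

Lemma central_plane_eq0 : lcs br 2 = derived -> z = 0.
Proof.
move=> lcsE.
have brw_onto v : v \in derived -> exists u, v = br w u.
  rewrite -lcsE => /(subvP lcs2_sub_limg_ad) /memv_imgP [u _ ->].
  by exists u; rewrite adE.
have [u1 zE] : exists u, z = br w u.
  by apply: brw_onto; rewrite derE (subvP (addvSl _ _)) ?memv_line.
have [u2 wE] : exists u, w = br w u.
  by apply: brw_onto; rewrite derE (subvP (addvSr _ _)) ?memv_line.
have := br_br_swap u1 u2.
rewrite [br u2 w]br_anticomm -wE [br u1 w]br_anticomm -zE !brNr.
rewrite [br u2 z]br_anticomm zC !oppr0 => /eqP; rewrite oppr_eq0 => /eqP u1w.
by rewrite zE br_anticomm u1w oppr0.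
Qed.

End CentralPlane.

Lemma center_eq0 z :
  lie_pure br -> \dim derived = 2 -> \dim (lcs br 2) = 2 -> in_center br z -> z = 0.
Proof.
move=> pure dim_der dim_lcs2 zC.
have zN := pure_center_sub_derived pure zC.
have [-> // | z0] := eqVneq z 0.
have [w wN wz] : exists2 w, w \in derived & w \notin <[z]>%VS.
  by apply/subvPn/negP => /dimvS; rewrite dim_vline z0 dim_der.
apply: (central_plane_eq0 (w := w) zC); apply/eqP.
  rewrite eq_sym eqEdim subv_add -!memvE zN wN dim_der.
  have : (\dim <[z]> < \dim (<[z]> + <[w]>))%N.
    by rewrite (ltn_leqif (dimv_leqif_sup (addvSl _ _))) subv_add subvv -memvE wz.
  by rewrite dim_vline z0.
by rewrite eqEdim lcs_sub_derived dim_der dim_lcs2.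
Qed.

End LieBracket.

Theorem proposition3p5 (L : vectType Cplx) (br : L -> L -> L) :
  is_lie_bracket br ->
  lie_pure br -> ~ lie_nilpotent br -> lie_solvable br ->
  has_breadth br 2 ->
  \dim (lie_comm br fullv fullv) = 2%N ->
  (forall k : nat, (2 <= k)%N -> \dim (lcs br k) = 2%N) ->
  (forall z : L, in_center br z -> z = 0) /\
  ((forall x y : L, in_centralizer br (lie_comm br fullv fullv) x ->
      in_centralizer br (lie_comm br fullv fullv) y -> br x y = 0) /\
   (forall x y : L, in_centralizer br (lie_comm br fullv fullv) y ->
      in_centralizer br (lie_comm br fullv fullv) (br x y))).
Proof.
move=> brL pure _ _ _ dim_der dim_lcs.
have center0 z := center_eq0 brL (z := z) pure dim_der (dim_lcs 2%N (leqnn 2)).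
split=> //; split=> [x y Cx Cy | x y].
- exact/center0/centralizer_derived_br_center.
- exact/centralizer_ideal_br/lie_ideal_derived.
Qed.
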